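(* Let $n\ge1$, $N=\{1,\dots,n\}$, $A=[0,1]$. Any OWA mechanism that satisfies proportionality (P) also satisfies proportional fairness (PF), and therefore unanimous fair share (UFS).
   Context: A mechanism is a map $f:A^n\to A$ from profiles $x=(x_i)_{i\in N}$ of reported locations to a facility location. An OWA mechanism has weights $w_1,\dots,w_n\in[0,1]$ with $\sum_j w_j=1$ and returns $f(x)=\sum_{j=1}^n w_j x_{\pi(j)}$, where $\pi$ is a permutation of $N$ with $x_{\pi(1)}\le\dots\le x_{\pi(n)}$. P: for every $x\in\{0,1\}^n$, $f(x)=\#\{i\in N: x_i=1\}/n$. PF: for every $x\in A^n$, every nonempty $S\subseteq N$ and every $i\in S$, $|x_i-f(x)|\le 1-\frac{|S|}{n}+r_S$ where $r_S=\max_{j\in S}x_j-\min_{j\in S}x_j$. UFS: for every $x\in A^n$, every nonempty $S\subseteq N$ such that all $x_j$, $j\in S$, are equal, and every $i\in S$, $|x_i-f(x)|\le 1-\frac{|S|}{n}$. *)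

From HB Require Import structures.
From mathcomp Require Import all_boot all_order all_algebra.
From mathcomp Require Import reals.
Set Implicit Arguments. Unset Strict Implicit. Unset Printing Implicit Defensive.
Import Order.TTheory GRing.Theory Num.Theory.
Local Open Scope ring_scope.

Section Defs.
Variables (R : realType) (n : nat).

Definition inA (a : R) : Prop := 0 <= a <= 1.

(* OWA mechanism with weights w: f(x) = sum_j w_j * x_(pi(j)), where
   x_(pi(1)) <= ... <= x_(pi(n)) is the nondecreasing rearrangement of x. *)
Definition sorted_profile (x : 'I_n -> R) : seq R :=
  sort <=%R [seq x i | i <- enum 'I_n].

Definition owa (w : 'I_n -> R) (x : 'I_n -> R) : R :=
  \sum_(j < n) w j * nth 0 (sorted_profile x) j.

(* r_S = max_{j in S} x_j - min_{j in S} x_j; i is any element of S,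
   used as the (neutral) seed of the iterated max/min. *)
Definition range_S (x : 'I_n -> R) (S : {set 'I_n}) (i : 'I_n) : R :=
  (\big[Num.max/x i]_(j in S) x j) - (\big[Num.min/x i]_(j in S) x j).

Definition Prop_P (f : ('I_n -> R) -> R) : Prop :=
  forall x : 'I_n -> R, (forall i, x i = 0 \/ x i = 1) ->
    f x = #|[set i | x i == 1]|%:R / n%:R.

Definition Prop_PF (f : ('I_n -> R) -> R) : Prop :=
  forall x : 'I_n -> R, (forall i, inA (x i)) ->
  forall S : {set 'I_n}, S != set0 ->
  forall i, i \in S ->
    `|x i - f x| <= 1 - #|S|%:R / n%:R + range_S x S i.

Definition Prop_UFS (f : ('I_n -> R) -> R) : Prop :=
  forall x : 'I_n -> R, (forall i, inA (x i)) ->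
  forall S : {set 'I_n}, S != set0 ->
  (forall j k, j \in S -> k \in S -> x j = x k) ->
  forall i, i \in S ->
    `|x i - f x| <= 1 - #|S|%:R / n%:R.

End Defs.

From HB Require Import structures.
From mathcomp Require Import all_boot all_order all_algebra.
From mathcomp Require Import reals.
From mathcomp Require Import ring lra.
Set Implicit Arguments. Unset Strict Implicit. Unset Printing Implicit Defensive.
Import Order.TTheory GRing.Theory Num.Theory.
Local Open Scope ring_scope.

(* P pins the OWA weights down: on the 0/1 profile whose ones are the agents
   k, ..., n-1 the mechanism returns the sum of the weights w_k, ..., w_(n-1),
   and P makes this (n - k)/n, so every weight is 1/n and the mechanism is the
   mean.  For the mean, x_i - f(x) is the average of the differences x_i - x_j,
   each at most r_S in absolute value when j is in S and at most 1 otherwise;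
   averaging gives PF.  UFS is the case r_S = 0 of PF. *)

Section Owa.
Variables (R : realType) (n : nat).
Implicit Types (w x : 'I_n -> R) (S : {set 'I_n}).

Lemma sorted_profile_homo x :
  {homo x : i j / (i <= j)%N >-> i <= j} ->
  sorted_profile x = [seq x i | i <- enum 'I_n].
Proof.
move=> x_homo; apply: sort_le_id; rewrite sorted_map.
apply: (sub_sorted x_homo).
by rewrite -sorted_map val_enum_ord iota_sorted.
Qed.

Lemma owa_homo w x :
  {homo x : i j / (i <= j)%N >-> i <= j} -> owa w x = \sum_j w j * x j.
Proof.
move/sorted_profile_homo => sorted_x; rewrite /owa sorted_x.
by apply: eq_bigr => j _; rewrite (nth_map j) ?size_enum_ord // nth_ord_enum.
Qed.

Definition step_profile (k : nat) : 'I_n -> R := fun i => (k <= i)%N%:R.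

Lemma step_profile01 k i : step_profile k i = 0 \/ step_profile k i = 1.
Proof. by rewrite /step_profile; case: leqP; [right | left]. Qed.

Lemma step_profile_eq1 k :
  [set i | step_profile k i == 1] = [set i : 'I_n | (k <= i)%N].
Proof. by apply/setP => i; rewrite !inE /step_profile pnatr_eq1; case: leqP. Qed.

Lemma owa_step_profile w k :
  owa w (step_profile k) = \sum_(j < n | (k <= j)%N) w j.
Proof.
rewrite owa_homo.
  by rewrite [RHS]big_mkcond; apply: eq_bigr => j _; rewrite mulr_natr mulrb.
move=> i j le_ij; rewrite /step_profile ler_nat.
by case: (leqP k i) => // /leq_trans/(_ le_ij) ->.
Qed.

Lemma card_geq_ord (j : 'I_n) :
  #|[set i : 'I_n | (j <= i)%N]| = #|[set i : 'I_n | (j < i)%N]|.+1.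
Proof.
rewrite (_ : [set i | _] = j |: [set i : 'I_n | (j < i)%N]) ?cardsU1 ?inE ?ltnn //.
by apply/setP => i; rewrite !inE leq_eqVlt -val_eqE eq_sym.
Qed.

Lemma sum_geq_ord w (j : 'I_n) :
  \sum_(i < n | (j <= i)%N) w i = w j + \sum_(i < n | (j < i)%N) w i.
Proof.
rewrite (bigD1 j) //=; congr (_ + _); apply: eq_bigl => i.
by rewrite ltn_neqAle andbC -val_eqE eq_sym.
Qed.

Lemma Prop_P_owa_weights w : Prop_P (owa w) -> forall j, w j = n%:R^-1.
Proof.
move=> hP.
have tail_sum k :
    \sum_(i < n | (k <= i)%N) w i = #|[set i : 'I_n | (k <= i)%N]|%:R / n%:R.
  by rewrite -owa_step_profile hP ?step_profile_eq1 //; exact: step_profile01.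
move=> j; have := tail_sum j.
rewrite sum_geq_ord card_geq_ord tail_sum mulrSr mulrDl addrC => /addrI ->.
by rewrite mul1r.
Qed.

Lemma sum_sorted_profile x :
  \sum_(j < n) nth 0 (sorted_profile x) j = \sum_i x i.
Proof.
have size_x : size (sorted_profile x) = n.
  by rewrite size_sort size_map size_enum_ord.
have -> : \sum_(j < n) nth 0 (sorted_profile x) j = \sum_(y <- sorted_profile x) y.
  by rewrite (big_nth 0) size_x big_mkord.
by rewrite (perm_big _ (permEl (perm_sort _ _))) big_map big_enum.
Qed.

Lemma owa_const w c x : (forall j, w j = c) -> owa w x = c * \sum_i x i.
Proof.
move=> wc; rewrite /owa -sum_sorted_profile mulr_sumr.
by apply: eq_bigr => j _; rewrite wc.
Qed.

Lemma dist_le_range_S x S i j :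
  i \in S -> j \in S -> `|x i - x j| <= range_S x S i.
Proof.
move=> iS jS; rewrite /range_S.
set M := \big[Num.max/x i]_(k in S) x k.
set m := \big[Num.min/x i]_(k in S) x k.
have le_M k : k \in S -> x k <= M by move=> kS; rewrite /M (bigD1 k) //= le_max lexx.
have ge_m k : k \in S -> m <= x k by move=> kS; rewrite /m (bigD1 k) //= ge_min lexx.
have := le_M i iS; have := le_M j jS; have := ge_m i iS; have := ge_m j jS.
by rewrite ler_norml => *; apply/andP; split; lra.
Qed.

Lemma Prop_PF_mean : Prop_PF (fun x : 'I_n -> R => n%:R^-1 * \sum_i x i).
Proof.
move=> x hA S _ i iS /=.
have n_gt0 : 0 < n%:R :> R by rewrite ltr0n (leq_ltn_trans (leq0n i)).
have r_ge0 : 0 <= range_S x S i.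
  by have := dist_le_range_S x iS iS; rewrite subrr normr0.
have dist_le j : `|x i - x j| <= range_S x S i + 1 - (if j \in S then 1 else 0).
  case: ifP => [jS|_]; first by have := dist_le_range_S x iS jS; lra.
  have /andP[xi_ge0 xi_le1] := hA i; have /andP[xj_ge0 xj_le1] := hA j.
  by rewrite ler_norml; apply/andP; split; lra.
have -> : x i - n%:R^-1 * \sum_j x j = n%:R^-1 * \sum_j (x i - x j).
  by rewrite sumrB sumr_const card_ord -mulr_natl; field; rewrite gt_eqF.
rewrite normrM gtr0_norm ?invr_gt0 //.
have -> : 1 - #|S|%:R / n%:R + range_S x S i =
    n%:R^-1 * \sum_j (range_S x S i + 1 - (if j \in S then 1 else 0)).
  rewrite sumrB -big_mkcond /= !sumr_const card_ord -[_ *+ n]mulr_natl.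
  by field; rewrite gt_eqF.
rewrite ler_pM2l ?invr_gt0 //.
exact: le_trans (ler_norm_sum _ _ _) (ler_sum _ (fun j _ => dist_le j)).
Qed.

Lemma range_S_const x S i : i \in S ->
  (forall j k, j \in S -> k \in S -> x j = x k) -> range_S x S i = 0.
Proof.
move=> iS x_const.
have big_const (op : R -> R -> R) :
    (forall a, op a a = a) -> \big[op/x i]_(j in S) x j = x i.
  move=> opK; apply: (big_ind (fun y => y = x i)) => // [a b -> -> | j jS].
    exact: opK.
  exact: x_const.
by rewrite /range_S (big_const _ maxxx) (big_const _ minxx) subrr.
Qed.

Lemma Prop_PF_UFS (f : ('I_n -> R) -> R) : Prop_PF f -> Prop_UFS f.
Proof.
move=> PF x hA S S_ne0 x_const i iS.
by have := PF x hA S S_ne0 i iS; rewrite range_S_const // addr0.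
Qed.

End Owa.

Theorem corollary2 (R : realType) (n : nat) (hn : (1 <= n)%N)
    (w : 'I_n -> R) (hw : forall j, 0 <= w j <= 1)
    (hsum : \sum_(j < n) w j = 1) :
  Prop_P (owa w) -> Prop_PF (owa w) /\ Prop_UFS (owa w).
Proof.
(* P alone forces every weight to be 1/n. *)
move=> hP.
have PF : Prop_PF (owa w).
  move=> x hA S S_ne0 i iS.
  rewrite (owa_const x (Prop_P_owa_weights hP)).
  exact: (@Prop_PF_mean R n x hA S S_ne0 i iS).
by split; last exact: Prop_PF_UFS.
Qed.
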